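(* Let $\varphi:\Lambda\to\Gamma$ be a regular covering map of degree $n$ of finite simplicial graphs without isolated vertices, with $|V\Gamma|=m$. Order $V\Lambda$ so that each fiber forms a consecutive block, the blocks being $V_1,\dots,V_m$, and order $V\Gamma$ as $\varphi(V_1),\dots,\varphi(V_m)$. Let $F\in\mathrm{Aut}(A_\Lambda)$ be a lift of $f\in\mathrm{Aut}(A_\Gamma)$. Then the $nm\times nm$ matrix $\tilde M$ of the action of $F$ on $H_1(A_\Lambda)$ is a blow up of the $m\times m$ matrix $M$ of the action of $f$ on $H_1(A_\Gamma)$.
   Context: $A_\Gamma$ is the right-angled Artin group with generators $V\Gamma$ and relations $[a,b]=1$ for edges; $H_1(A_\Gamma)\cong\mathbb Z^{V\Gamma}$ with basis the vertices, and the matrix of an automorphism has as the column of a vertex $v$ the coordinates of the image of $v$. A covering map $\varphi:\Lambda\to\Gamma$ is a surjective simplicial map mapping the neighbours of each vertex $u$ bijectively onto the neighbours of $\varphi(u)$; regular means the group of graph automorphisms $\mu$ of $\Lambda$ with $\varphi\mu=\varphi$ acts transitively on each fiber; the degree is the common fiber size. $\phi:A_\Lambda\to A_\Gamma$ is induced by $\varphi$, and $F$ is a lift of $f$ if $f\circ\phi=\phi\circ F$. An $nm\times nm$ matrix $\tilde M$ with $n\times n$ blocks is a blow up of an $m\times m$ matrix $M$ if, for all $i,j$, every column of the $(i,j)$ block of $\tilde M$ has all entries $0$ except one entry equal to $M(i,j)$. *)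

From Stdlib Require Import Relations.
From mathcomp Require Import all_boot all_order all_algebra all_fingroup.
Set Implicit Arguments. Unset Strict Implicit. Unset Printing Implicit Defensive.
Import Order.TTheory GRing.Theory Num.Theory.

(* A letter (v, true) is the generator v, (v, false) is its inverse.   *)
Section RAAG.
Variable V : finType.

Definition inv_word (w : seq (V * bool)) : seq (V * bool) :=
  rev (map (fun x => (x.1, ~~ x.2)) w).

Inductive raag_step (adj : rel V) : seq (V * bool) -> seq (V * bool) -> Prop :=
| rs_cancel (w1 w2 : seq (V * bool)) (a : V) (b : bool) :
    raag_step adj (w1 ++ (a, b) :: (a, ~~ b) :: w2) (w1 ++ w2)
| rs_comm (w1 w2 : seq (V * bool)) (x y : V * bool) :
    adj x.1 y.1 -> raag_step adj (w1 ++ x :: y :: w2) (w1 ++ y :: x :: w2).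

Definition raag_eq (adj : rel V) : relation (seq (V * bool)) :=
  clos_refl_sym_trans _ (raag_step adj).

(* exponent sum of v in w: the v-coordinate of the image of w in H_1 = Z^V *)
Definition expsum (w : seq (V * bool)) (v : V) : int :=
  \sum_(x <- w | x.1 == v) (if x.2 then 1%R else (-1)%R).
End RAAG.

Definition subst (V W : finType) (g : V -> seq (W * bool)) (w : seq (V * bool))
  : seq (W * bool) :=
  flatten (map (fun x => if x.2 then g x.1 else inv_word (g x.1)) w).

Definition raag_hom (V W : finType) (adjV : rel V) (adjW : rel W)
  (g : V -> seq (W * bool)) : Prop :=
  forall w1 w2, raag_eq adjV w1 w2 -> raag_eq adjW (subst g w1) (subst g w2).

Definition raag_aut (V : finType) (adj : rel V) (g : V -> seq (V * bool)) : Prop :=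
  raag_hom adj adj g /\
  exists h : V -> seq (V * bool),
    [/\ raag_hom adj adj h,
        forall v, raag_eq adj (subst h (g v)) [:: (v, true)] &
        forall v, raag_eq adj (subst g (h v)) [:: (v, true)]].

(* matrix of the action on H_1 (column j = coordinates of the image of j) *)
Definition raag_mat (N : nat) (g : 'I_N -> seq ('I_N * bool)) : 'M[int]_N :=
  \matrix_(i, j) expsum (g j) i.

Definition simple_graph (V : finType) (adj : rel V) : Prop :=
  symmetric adj /\ irreflexive adj.

Definition no_isolated (V : finType) (adj : rel V) : Prop :=
  forall v, exists w, adj v w.

Definition covering_map (VL VG : finType) (adjL : rel VL) (adjG : rel VG)
  (phi : VL -> VG) : Prop :=
  [/\ forall w, exists u, phi u = w,
      forall u v, adjL u v -> adjG (phi u) (phi v),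
      forall u, {in [pred v | adjL u v] &, injective phi} &
      forall u w, adjG (phi u) w -> exists2 v, adjL u v & phi v = w].

Definition deck (VL VG : finType) (adjL : rel VL) (phi : VL -> VG)
  (mu : {perm VL}) : Prop :=
  (forall x y, adjL (mu x) (mu y) = adjL x y) /\ (forall x, phi (mu x) = phi x).

Definition regular_covering (VL VG : finType) (adjL : rel VL) (adjG : rel VG)
  (phi : VL -> VG) : Prop :=
  covering_map adjL adjG phi /\
  forall u u', phi u = phi u' -> exists2 mu, deck adjL phi mu & mu u = u'.

Definition is_lift (VL VG : finType) (adjG : rel VG) (phi : VL -> VG)
  (F : VL -> seq (VL * bool)) (f : VG -> seq (VG * bool)) : Prop :=
  forall u, raag_eq adjG (f (phi u)) (subst (fun x => [:: (phi x, true)]) (F u)).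

(* Mt (nm x nm, blocks of size n) is a blow up of M (m x m);
   the (i,j) block consists of rows r with r %/ n = i and columns c with c %/ n = j *)
Definition blow_up (n m : nat) (Mt : 'M[int]_(n * m)) (M : 'M[int]_m) : Prop :=
  forall (i j : 'I_m) (c : 'I_(n * m)), c %/ n = j ->
    exists2 r : 'I_(n * m), r %/ n = i &
      Mt r c = M i j /\ (forall r' : 'I_(n * m), r' %/ n = i -> r' != r -> Mt r' c = 0%R).

(* Abelianising an automorphism F of A_Λ gives its matrix, and abelianising
   f ∘ φ = φ ∘ F shows that the entries of a column of F's matrix over a fibre
   of φ sum to the corresponding entry of f's matrix.  It remains to see that
   such a column has at most one nonzero entry per fibre.  Two vertices of a
   fibre are at distance at least 3 in Λ.  If F(u) has nonzero exponent sums
   at two such vertices, pick a neighbour y of u: F(u) and F(y) commute, and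
   the Heisenberg-group invariant of a pair of non-adjacent generators forces
   the exponent-sum vectors of F(u) and F(y) to be proportional, which is
   incompatible with invertibility of F on H_1. *)
From Stdlib Require Import Relations.
From mathcomp Require Import all_boot all_order all_algebra all_fingroup.
From mathcomp Require Import ring.
Set Implicit Arguments. Unset Strict Implicit. Unset Printing Implicit Defensive.
Import Order.TTheory GRing.Theory Num.Theory.
Local Open Scope ring_scope.

Section Words.
Variable V : finType.
Implicit Types (w : seq (V * bool)) (p q v : V) (adj : rel V).

Definition letter_sign (x : V * bool) : int := if x.2 then 1 else -1.

Lemma expsum_nil v : expsum [::] v = 0.
Proof. by rewrite /expsum big_nil. Qed.

Lemma expsum_cons x w v :
  expsum (x :: w) v = (if x.1 == v then letter_sign x else 0) + expsum w v.
Proof. by rewrite /expsum big_cons; case: ifP => _ //; rewrite add0r. Qed.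

Lemma expsum_cat w1 w2 v : expsum (w1 ++ w2) v = expsum w1 v + expsum w2 v.
Proof. by rewrite /expsum big_cat. Qed.

Lemma expsum_inv_word w v : expsum (inv_word w) v = - expsum w v.
Proof.
elim: w => [|x w IH]; first by rewrite /inv_word /= expsum_nil oppr0.
rewrite /inv_word map_cons rev_cons -cats1 -/(inv_word w).
rewrite expsum_cat IH !expsum_cons expsum_nil /letter_sign /=.
by case: x.2; case: (x.1 == v) => /=; ring.
Qed.

Lemma raag_eq_invariant (T : Type) (g : seq (V * bool) -> T) adj w1 w2 :
  raag_eq adj w1 w2 ->
  (forall u1 u2, raag_step adj u1 u2 -> g u1 = g u2) -> g w1 = g w2.
Proof.
by move=> + g_step; elim=> [u1 u2 /g_step | | u1 u2 _ -> | u1 u2 u3 _ -> _ ->].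
Qed.
Arguments raag_eq_invariant {T} g {adj w1 w2}.

Lemma raag_step_expsum adj w1 w2 v :
  raag_step adj w1 w2 -> expsum w1 v = expsum w2 v.
Proof.
case=> [u1 u2 a b | u1 u2 x y _]; rewrite !expsum_cat !expsum_cons /letter_sign /=.
  by case: b; case: (a == v) => /=; ring.
by congr (_ + _); rewrite addrCA.
Qed.

Lemma raag_eq_expsum adj w1 w2 v : raag_eq adj w1 w2 -> expsum w1 v = expsum w2 v.
Proof.
by move/(raag_eq_invariant (fun w => expsum w v)); apply=> u1 u2 /raag_step_expsum.
Qed.

(* The central coordinate of the image of w in the Heisenberg group
   Z^2 x Z, with law (a, c) (a', c') = (a + a', c + c' + det(a, a')), under
   p |-> (e_1, 0), q |-> (e_2, 0) and the other generators |-> 1.  This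
   factors through A_Γ when p and q are not adjacent. *)
Fixpoint area p q w : int :=
  match w with
  | [::] => 0
  | x :: w' => area p q w' + letter_sign x *
      ((if x.1 == p then expsum w' q else 0) - (if x.1 == q then expsum w' p else 0))
  end.

Lemma area_cat p q w1 w2 : area p q (w1 ++ w2) = area p q w1 + area p q w2 +
  (expsum w1 p * expsum w2 q - expsum w1 q * expsum w2 p).
Proof.
elim: w1 => [|x w1 IH] /=; first by rewrite !expsum_nil; ring.
rewrite IH !expsum_cat !expsum_cons.
by case: (x.1 == p); case: (x.1 == q) => /=; ring.
Qed.

Lemma raag_step_area adj p q w1 w2 : ~~ adj p q -> ~~ adj q p ->
  raag_step adj w1 w2 -> area p q w1 = area p q w2.
Proof.
move=> npq nqp [u1 u2 a b | u1 u2 x y axy]; rewrite !area_cat.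
  rewrite -[_ :: _ :: u2]/([:: (a, b); (a, ~~ b)] ++ u2).
  rewrite !area_cat !expsum_cat /= !expsum_cons !expsum_nil /letter_sign /=.
  by case: b; case: (a == p); case: (a == q) => /=; ring.
rewrite -[x :: y :: u2]/([:: x; y] ++ u2) -[y :: x :: u2]/([:: y; x] ++ u2).
rewrite !area_cat !expsum_cat /= !expsum_cons !expsum_nil.
have not_pq : ~~ ((x.1 == p) && (y.1 == q)).
  by apply/andP => -[/eqP xp /eqP yq]; move: npq; rewrite -xp -yq axy.
have not_qp : ~~ ((x.1 == q) && (y.1 == p)).
  by apply/andP => -[/eqP xq /eqP yp]; move: nqp; rewrite -xq -yp axy.
move: not_pq not_qp.
by case: (x.1 == p); case: (y.1 == q); case: (x.1 == q); case: (y.1 == p)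
  => //= _ _; ring.
Qed.

Lemma raag_eq_area adj p q w1 w2 : ~~ adj p q -> ~~ adj q p ->
  raag_eq adj w1 w2 -> area p q w1 = area p q w2.
Proof.
move=> npq nqp /(raag_eq_invariant (area p q)).
by apply=> u1 u2 /(raag_step_area npq nqp).
Qed.

(* The cross term of [area_cat] changes sign when w1 and w2 are swapped. *)
Lemma raag_eq_commute_expsum adj p q w1 w2 : ~~ adj p q -> ~~ adj q p ->
  raag_eq adj (w1 ++ w2) (w2 ++ w1) ->
  expsum w1 p * expsum w2 q = expsum w1 q * expsum w2 p.
Proof.
move=> npq nqp /(raag_eq_area npq nqp).
rewrite !area_cat (addrC (area p q w2)) => /addrI cross.
have twice0 : (expsum w1 p * expsum w2 q - expsum w1 q * expsum w2 p) *+ 2 = 0.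
  by rewrite mulr2n [X in _ + X = 0]cross; ring.
by apply/eqP; move/eqP: twice0; rewrite mulrn_eq0 subr_eq0.
Qed.
End Words.

Lemma expsum_subst (V W : finType) (g : V -> seq (W * bool)) w p :
  expsum (subst g w) p = \sum_q expsum w q * expsum (g q) p.
Proof.
elim: w => [|x w IH].
  by rewrite /subst /= expsum_nil big1 // => q _; rewrite expsum_nil mul0r.
rewrite [subst g _]/= expsum_cat IH -/(subst g w).
under [RHS]eq_bigr => q _ do rewrite expsum_cons mulrDl.
rewrite big_split /=; congr (_ + _).
rewrite (bigD1 x.1) //= eqxx big1 ?addr0.
  by case: x => a [] /=; rewrite /letter_sign /= ?expsum_inv_word; ring.
by move=> q; rewrite eq_sym => /negbTE ->; rewrite mul0r.
Qed.

Lemma expsum_relabel (V W : finType) (phi : V -> W) w i :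
  expsum (subst (fun x => [:: (phi x, true)]) w) i =
  \sum_(q | phi q == i) expsum w q.
Proof.
rewrite expsum_subst [RHS]big_mkcond; apply: eq_bigr => q _.
rewrite expsum_cons expsum_nil addr0 /letter_sign.
by case: eqP; rewrite ?mulr1 ?mulr0.
Qed.

Lemma raag_hom_commute (V W : finType) (adjV : rel V) (adjW : rel W) g u y :
  raag_hom adjV adjW g -> adjV u y -> raag_eq adjW (g u ++ g y) (g y ++ g u).
Proof.
move=> hom_g auy; have := hom_g [:: (u, true); (y, true)] [:: (y, true); (u, true)].
rewrite /subst /= !cats0; apply; apply: rst_step.
exact: (@rs_comm _ adjV [::] [::] (u, true) (y, true)).
Qed.

Lemma raag_mat_subst N (g h : 'I_N -> seq ('I_N * bool)) :
  raag_mat (fun v => subst h (g v)) = raag_mat h *m raag_mat g.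
Proof.
apply/matrixP => i j; rewrite !mxE expsum_subst.
by apply: eq_bigr => q _; rewrite !mxE mulrC.
Qed.

Lemma raag_mat_left_inverse N (adj : rel 'I_N) (g h : 'I_N -> seq ('I_N * bool)) :
  (forall v, raag_eq adj (subst h (g v)) [:: (v, true)]) ->
  raag_mat h *m raag_mat g = 1%:M.
Proof.
move=> hg; rewrite -raag_mat_subst; apply/matrixP => i j.
rewrite !mxE (raag_eq_expsum i (hg j)) expsum_cons expsum_nil addr0 eq_sym.
by case: eqP.
Qed.

Lemma proportional_extend (V : Type) (R : idomainType) (adj : rel V)
    (x z : V -> R) v w :
  (forall p q, ~~ adj p q -> x p * z q = x q * z p) ->
  ~~ adj v w -> (forall q, adj v q -> ~~ adj w q) -> x w != 0 ->
  forall q, x v * z q = x q * z v.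
Proof.
move=> cross nvw disjoint xw0 q.
case avq: (adj v q); last by apply: cross; rewrite avq.
apply: (mulfI xw0).
by rewrite mulrCA (cross w q) ?disjoint // mulrCA (cross v w) // mulrCA.
Qed.

Lemma proportional_cols_entry_eq0 (R : comPzRingType) N (A B : 'M[R]_N) u y v :
  B *m A = 1%:M -> u != y -> (forall q, A v u * A q y = A q u * A v y) -> A v u = 0.
Proof.
move=> BA1 nuy prop.
have /(congr1 (fun M : 'M_N => A v u * M y y)) := BA1.
rewrite !mxE eqxx mulr1 => <-; rewrite mulr_sumr.
under eq_bigr => q _ do rewrite mulrCA prop mulrA.
have /(congr1 (fun M : 'M_N => M y u)) := BA1.
by rewrite !mxE eq_sym (negbTE nuy) -mulr_suml => ->; rewrite mul0r.
Qed.

(* For v != w this says that v and w are at distance at least 3. *)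
Definition apart {V : Type} (adj : rel V) (v w : V) : Prop :=
  ~~ adj v w /\ forall q, adj v q -> ~~ adj w q.

Lemma covering_fiber_apart (VL VG : finType) (adjL : rel VL) (adjG : rel VG)
    (phi : VL -> VG) v w :
  irreflexive adjG -> symmetric adjL -> covering_map adjL adjG phi ->
  v != w -> phi v = phi w -> apart adjL v w.
Proof.
move=> irrG symL [_ simplicial loc_inj _] nvw pvw; split.
  by apply/negP => /simplicial; rewrite pvw irrG.
move=> q avq; apply/negP => awq; move/eqP: nvw; apply.
by apply: (loc_inj q); rewrite // inE symL.
Qed.

Lemma raag_aut_col_apart N (adj : rel 'I_N) (g h : 'I_N -> seq ('I_N * bool))
    u v w :
  simple_graph adj -> no_isolated adj -> raag_hom adj adj g ->
  (forall v, raag_eq adj (subst h (g v)) [:: (v, true)]) ->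
  apart adj v w -> raag_mat g w u != 0 -> raag_mat g v u = 0.
Proof.
move=> [symA irrA] noiso hom_g hg [nvw disjoint] nz.
have [y auy] := noiso u.
have nuy : u != y by apply: contraTneq auy => <-; rewrite irrA.
apply: (proportional_cols_entry_eq0 (raag_mat_left_inverse hg) nuy).
apply: (proportional_extend (x := raag_mat g ^~ u)) nvw disjoint nz => p q npq.
have nqp : ~~ adj q p by rewrite symA.
rewrite !mxE.
exact: raag_eq_commute_expsum npq nqp (raag_hom_commute hom_g auy).
Qed.

Lemma blow_up_of_fiber_sums n m (Mt : 'M[int]_(n * m)) (M : 'M[int]_m) :
  (forall (i j : 'I_m) (c : 'I_(n * m)), (c %/ n)%N = j ->
     M i j = \sum_(r : 'I_(n * m) | (r %/ n)%N == i) Mt r c) ->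
  (forall c r r' : 'I_(n * m), (r %/ n = r' %/ n)%N -> r != r' -> Mt r c != 0 ->
     Mt r' c = 0) ->
  blow_up Mt M.
Proof.
move=> fiber_sum single i j c cj.
pose nonzero_in_block (r : 'I_(n * m)) := ((r %/ n)%N == i) && (Mt r c != 0).
have [r /andP [/eqP ri nz] | none] := pickP nonzero_in_block.
  have others (r' : 'I_(n * m)) : (r' %/ n)%N = i -> r' != r -> Mt r' c = 0.
    by move=> r'i nr'r; apply: (single c r) nz; rewrite ?r'i // eq_sym.
  exists r => //; split; last exact: others.
  rewrite (fiber_sum _ _ _ cj) (bigD1 r) ?ri //= big1 ?addr0 //.
  by move=> q /andP [/eqP qi nqr]; apply: others.
have zero (r : 'I_(n * m)) : (r %/ n)%N = i -> Mt r c = 0.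
  move=> ri; apply/eqP; move: (none r).
  by rewrite /nonzero_in_block ri eqxx => /negbFE.
have n_gt0 : (0 < n)%N.
  by have := leq_ltn_trans (leq0n c) (ltn_ord c); rewrite muln_gt0 => /andP [].
have lt_in_nm : (i * n < n * m)%N by rewrite mulnC ltn_pmul2l.
exists (Ordinal lt_in_nm); first by rewrite /= mulnK.
split=> [|r' /zero //]; rewrite zero /= ?mulnK //.
by rewrite (fiber_sum _ _ _ cj) big1 // => r /eqP /zero.
Qed.

Local Close Scope ring_scope.

Theorem lemma8p3 (n m : nat)
  (adjG : rel 'I_m) (adjL : rel 'I_(n * m)) (phi : 'I_(n * m) -> 'I_m)
  (f : 'I_m -> seq ('I_m * bool)) (F : 'I_(n * m) -> seq ('I_(n * m) * bool)) :
  simple_graph adjG -> simple_graph adjL ->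
  no_isolated adjG -> no_isolated adjL ->
  regular_covering adjL adjG phi ->
  (* ordering: fibres are the consecutive blocks V_1..V_m of size n (so the
     degree is n), and V_Gamma is ordered as phi(V_1),...,phi(V_m) *)
  (forall k : 'I_(n * m), val (phi k) = k %/ n) ->
  raag_aut adjG f -> raag_aut adjL F ->
  is_lift adjG phi F f ->
  blow_up (raag_mat F) (raag_mat f).
Proof.
move=> [_ irrG] /[dup] simpleL [symL _] _ noisoL [coverL _] phi_div _.
move=> [homF [h [_ hF _]]] lift.
have phi_block r i : (phi r == i) = (r %/ n == i) by rewrite -val_eqE /= phi_div.
apply: blow_up_of_fiber_sums => [i j c cj | c r r' rr' nrr'].
  have <- : phi c = j by apply: val_inj; rewrite /= phi_div.
  rewrite mxE (raag_eq_expsum i (lift c)) expsum_relabel.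
  by apply: eq_big => r; rewrite ?phi_block ?mxE.
have same_fiber : phi r' = phi r by apply: val_inj; rewrite /= !phi_div.
have apart_r'r : apart adjL r' r.
  by apply: covering_fiber_apart irrG symL coverL _ same_fiber; rewrite eq_sym.
exact: raag_aut_col_apart simpleL noisoL homF hF apart_r'r.
Qed.
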